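(* For any set $\Phi\cup\{\psi\}$ of $\mathsf{BSML}^{\sqcup}$-formulas, if $\Phi\vdash\psi$ in the natural deduction system $\mathcal{S}^{\sqcup}$ described below, then $\Phi\models\psi$.
   Context: Syntax: $\mathsf{BSML}^{\sqcup}$-formulas $\phi ::= p \mid \neg\phi \mid (\phi\wedge\phi) \mid (\phi\vee\phi) \mid \Diamond\phi \mid \mathrm{NE}\mid\phi\sqcup\phi$ ($p$ from a countably infinite set of variables). Classical formulas (denoted $\alpha,\beta$) are those built from $p,\neg,\wedge,\vee,\Diamond$ only. Abbreviations: $\Box\phi:=\neg\Diamond\neg\phi$; $\bot:=p\wedge\neg p$ (fixed $p$); $\bot\!\!\!\bot:=\bot\wedge\mathrm{NE}$. Semantics on Kripke models $M=(W,R,V)$ and states $s\subseteq W$: $s\models p$ iff $s\subseteq V(p)$; $s\dashv p$ iff $s\cap V(p)=\emptyset$; $s\models\mathrm{NE}$ iff $s\ne\emptyset$; $s\dashv\mathrm{NE}$ iff $s=\emptyset$; $s\models\neg\phi$ iff $s\dashv\phi$; $s\dashv\neg\phi$ iff $s\models\phi$; $s\models\phi\wedge\psi$ iff both; $s\dashv\phi\wedge\psi$ iff $s=t\cup u$ with $t\dashv\phi$, $u\dashv\psi$; $s\models\phi\vee\psi$ iff $s=t\cup u$ with $t\models\phi$, $u\models\psi$; $s\dashv\phi\vee\psi$ iff $s\dashv\phi$ and $s\dashv\psi$; $s\models\phi\sqcup\psi$ iff $s\models\phi$ or $s\models\psi$; $s\dashv\phi\sqcup\psi$ iff $s\dashv\phi$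 and $s\dashv\psi$; $s\models\Diamond\phi$ iff every $w\in s$ has a nonempty $t\subseteq R[w]$ with $t\models\phi$; $s\dashv\Diamond\phi$ iff $R[w]\dashv\phi$ for all $w\in s$ (where $R[w]=\{v:wRv\}$). $\Phi\models\psi$ iff every state (in every model) supporting all formulas of $\Phi$ supports $\psi$. System $\mathcal{S}^{\sqcup}$ (natural deduction with assumptions that may be discharged; $\Phi\vdash\psi$ iff there is a derivation of $\psi$ all of whose undischarged assumptions lie in $\Phi$; ''$A\Leftrightarrow B$'' means both one-step rules $A/B$ and $B/A$; $\phi,\psi,\chi$ range over all formulas): (a) $\wedge$I: from $\phi,\psi$ infer $\phi\wedge\psi$; $\wedge$E: from $\phi\wedge\psi$ infer $\phi$, and infer $\psi$. (b) $\neg$I: from a derivation of $\bot$ from assumption $\alpha$ infer $\neg\alpha$ discharging $\alpha$, provided the undischarged assumptions of that derivation contain no $\mathrm{NE}$; $\neg$E: from $\alpha$ and $\neg\alpha$ infer $\beta$; $\neg\neg\phi\Leftrightarrow\phi$; $\neg(\phi\wedge\psi)\Leftrightarrow\neg\phi\vee\neg\psi$; $\neg(\phi\vee\psi)\Leftrightarrow\neg\phi\wedge\neg\psi$; $\neg\mathrm{NE}\Leftrightarrow\bot$. (c) $\vee$I: from $\phi$ infer $\phi\vee\psi$, provided $\psi$ contains no $\mathrm{NE}$; $\vee$W: from $\phi$ infer $\phi\vee\phi$; Com: from $\phi\vee\psi$ infer $\psi\vee\phi$; $\vee$E: from $\phi\vee\psi$, a derivation of $\chi$ from $\phi$ and a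 derivation of $\chi$ from $\psi$, infer $\chi$ (discharging $\phi,\psi$), provided the undischarged assumptions of the two subderivations contain no $\mathrm{NE}$ and $\chi$ contains no $\sqcup$; $\vee$Mon: from $\phi\vee\psi$ and a derivation of $\chi$ from $\psi$ whose undischarged assumptions contain no $\mathrm{NE}$, infer $\phi\vee\chi$ (discharging $\psi$). (d) from $\bot\vee\phi$ infer $\phi$; from $\bot\!\!\!\bot\vee\phi$ infer any $\psi$. (e) $\Diamond$Mon: if $\psi$ is derivable from $\phi$ alone (no other undischarged assumptions), from $\Diamond\phi$ infer $\Diamond\psi$; $\Box$Mon: if $\psi$ is derivable from $\phi_1,\dots,\phi_n$ alone, from $\Box\phi_1,\dots,\Box\phi_n$ infer $\Box\psi$; $\neg\Diamond\phi\Leftrightarrow\Box\neg\phi$. (f) from $\Diamond(\phi\vee(\psi\wedge\mathrm{NE}))$ infer $\Diamond\psi$; from $\Diamond\phi,\Diamond\psi$ infer $\Diamond(\phi\vee\psi)$; from $\Box(\phi\wedge\mathrm{NE})$ infer $\Diamond\phi$; from $\Box\phi,\Diamond\psi$ infer $\Box(\phi\vee\psi)$. (g) $\sqcup$I: from $\phi$ infer $\phi\sqcup\psi$ and $\psi\sqcup\phi$; $\sqcup$E: from $\phi\sqcup\psi$, a derivation of $\chi$ from $\phi$ and one from $\psi$, infer $\chi$ (discharging); from $\phi\vee(\psi\sqcup\chi)$ infer $(\phi\vee\psi)\sqcup(\phi\vee\chi)$; $\neg(\phi\sqcup\psi)\Leftrightarrow\neg\phi\wedge\neg\psi$; axiom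 $\bot\sqcup\mathrm{NE}$. (h) $\Diamond(\phi\sqcup\psi)\Leftrightarrow\Diamond\phi\vee\Diamond\psi$; $\Box(\phi\sqcup\psi)\Leftrightarrow\Box\phi\vee\Box\psi$. *)

From Stdlib Require Import List.

Inductive form : Type :=
| Var : nat -> form
| Neg : form -> form
| And : form -> form -> form
| Or  : form -> form -> form
| Dia : form -> form
| NE  : form
| GOr : form -> form -> form.

Fixpoint classical (f : form) : bool :=
  match f with
  | Var _ => true
  | Neg g => classical g
  | And g h | Or g h => classical g && classical h
  | Dia g => classical g
  | NE => false
  | GOr _ _ => false
  end.

Fixpoint ne_free (f : form) : bool :=
  match f with
  | Var _ => true
  | Neg g | Dia g => ne_free g
  | And g h | Or g h | GOr g h => ne_free g && ne_free h
  | NE => false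
  end.

Fixpoint gor_free (f : form) : bool :=
  match f with
  | Var _ | NE => true
  | Neg g | Dia g => gor_free g
  | And g h | Or g h => gor_free g && gor_free h
  | GOr _ _ => false
  end.

Definition Box (f : form) : form := Neg (Dia (Neg f)).
Definition p0 : nat := 0.
Definition Bot : form := And (Var p0) (Neg (Var p0)).
Definition BotBot : form := And Bot NE.

Record model : Type := Model {
  W : Type;
  Rel : W -> W -> Prop;
  Val : nat -> W -> Prop
}.

Definition state (M : model) : Type := W M -> Prop.

Definition is_union {M : model} (s t u : state M) : Prop :=
  forall w, s w <-> (t w \/ u w).

Fixpoint supp (M : model) (f : form) (s : state M) {struct f} : Prop :=
  match f with
  | Var p => forall w, s w -> Val M p w
  | Neg g => anti M g s
  | And g h => supp M g s /\ supp M h s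
  | Or g h => exists t u, is_union s t u /\ supp M g t /\ supp M h u
  | Dia g => forall w, s w ->
      exists t : state M, (forall v, t v -> Rel M w v) /\ (exists v, t v) /\ supp M g t
  | NE => exists w, s w
  | GOr g h => supp M g s \/ supp M h s
  end
with anti (M : model) (f : form) (s : state M) {struct f} : Prop :=
  match f with
  | Var p => forall w, s w -> ~ Val M p w
  | Neg g => supp M g s
  | And g h => exists t u, is_union s t u /\ anti M g t /\ anti M h u
  | Or g h => anti M g s /\ anti M h s
  | Dia g => forall w, s w -> anti M g (fun v => Rel M w v)
  | NE => forall w, ~ s w
  | GOr g h => anti M g s /\ anti M h s
  end.

Definition entails (Phi : form -> Prop) (psi : form) : Prop :=
  forall (M : model) (s : state M),
    (forall phi, Phi phi -> supp M phi s) -> supp M psi s.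

(* Der G f : there is a derivation of f all of whose undischarged assumptions
   lie in the set G. *)

Definition ext (G : form -> Prop) (f : form) : form -> Prop :=
  fun x => G x \/ x = f.

(* D is a (possible) set of undischarged assumptions of a subderivation
   discharging f in a context G, none of which contains NE *)
Definition nefree_sub (D G : form -> Prop) (f : form) : Prop :=
  (forall x, D x -> ext G f x) /\ (forall x, D x -> ne_free x = true).

Definition only (f : form) : form -> Prop := fun x => x = f.

Inductive Der : (form -> Prop) -> form -> Prop :=
| D_ax G f : G f -> Der G f
| D_andI G f g : Der G f -> Der G g -> Der G (And f g)
| D_andE1 G f g : Der G (And f g) -> Der G f
| D_andE2 G f g : Der G (And f g) -> Der G g
| D_negI G D a : classical a = true -> nefree_sub D G a -> Der D Bot ->
    Der G (Neg a)
| D_negE G a b : classical a = true -> classical b = true ->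
    Der G a -> Der G (Neg a) -> Der G b
| D_dneE G f : Der G (Neg (Neg f)) -> Der G f
| D_dneI G f : Der G f -> Der G (Neg (Neg f))
| D_dmAnd1 G f g : Der G (Neg (And f g)) -> Der G (Or (Neg f) (Neg g))
| D_dmAnd2 G f g : Der G (Or (Neg f) (Neg g)) -> Der G (Neg (And f g))
| D_dmOr1 G f g : Der G (Neg (Or f g)) -> Der G (And (Neg f) (Neg g))
| D_dmOr2 G f g : Der G (And (Neg f) (Neg g)) -> Der G (Neg (Or f g))
| D_negNE1 G : Der G (Neg NE) -> Der G Bot
| D_negNE2 G : Der G Bot -> Der G (Neg NE)
| D_orI G f g : ne_free g = true -> Der G f -> Der G (Or f g)
| D_orW G f : Der G f -> Der G (Or f f)
| D_orCom G f g : Der G (Or f g) -> Der G (Or g f)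
| D_orE G D1 D2 f g h :
    Der G (Or f g) ->
    nefree_sub D1 G f -> Der D1 h ->
    nefree_sub D2 G g -> Der D2 h ->
    gor_free h = true ->
    Der G h
| D_orMon G D f g h :
    Der G (Or f g) -> nefree_sub D G g -> Der D h -> Der G (Or f h)
| D_botOr G f : Der G (Or Bot f) -> Der G f
| D_botbotOr G f g : Der G (Or BotBot f) -> Der G g
| D_diaMon G f g : Der (only f) g -> Der G (Dia f) -> Der G (Dia g)
| D_boxMon G (l : list form) g :
    Der (fun x => In x l) g -> (forall f, In f l -> Der G (Box f)) ->
    Der G (Box g)
| D_negDia1 G f : Der G (Neg (Dia f)) -> Der G (Box (Neg f))
| D_negDia2 G f : Der G (Box (Neg f)) -> Der G (Neg (Dia f))
| D_diaNE G f g : Der G (Dia (Or f (And g NE))) -> Der G (Dia g)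
| D_diaJoin G f g : Der G (Dia f) -> Der G (Dia g) -> Der G (Dia (Or f g))
| D_boxNE G f : Der G (Box (And f NE)) -> Der G (Dia f)
| D_boxDia G f g : Der G (Box f) -> Der G (Dia g) -> Der G (Box (Or f g))
| D_gorI1 G f g : Der G f -> Der G (GOr f g)
| D_gorI2 G f g : Der G f -> Der G (GOr g f)
| D_gorE G f g h :
    Der G (GOr f g) -> Der (ext G f) h -> Der (ext G g) h -> Der G h
| D_gorDist G f g h :
    Der G (Or f (GOr g h)) -> Der G (GOr (Or f g) (Or f h))
| D_negGor1 G f g : Der G (Neg (GOr f g)) -> Der G (And (Neg f) (Neg g))
| D_negGor2 G f g : Der G (And (Neg f) (Neg g)) -> Der G (Neg (GOr f g))
| D_gorAx G : Der G (GOr Bot NE)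
| D_diaGor1 G f g : Der G (Dia (GOr f g)) -> Der G (Or (Dia f) (Dia g))
| D_diaGor2 G f g : Der G (Or (Dia f) (Dia g)) -> Der G (Dia (GOr f g))
| D_boxGor1 G f g : Der G (Box (GOr f g)) -> Der G (Or (Box f) (Box g))
| D_boxGor2 G f g : Der G (Or (Box f) (Box g)) -> Der G (Box (GOr f g)).

(* The side
   conditions of the rules are exactly what the semantics needs: NE-free
   formulas are downward closed and supported by the empty state (so that
   assumptions survive the passage to the substates used by the discharging
   rules, and the [Or]-introduction may pad with the empty state), GOr-free
   formulas are closed under unions (so that [Or]-elimination can glue the two
   halves back together), and classical formulas are flat, i.e. supported
   exactly by the states all of whose worlds make them true (which gives
   [Neg]-introduction by testing singleton states, and ex falso). *)

From Stdlib Require Import List Classical.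

Section Closure.
Variable M : model.

Lemma supp_anti_ext f (s s' : state M) : (forall w, s w <-> s' w) ->
  (supp M f s -> supp M f s') /\ (anti M f s -> anti M f s').
Proof.
  revert s s'; induction f; intros s s' E; simpl.
  - split; intros Hs w Hw; apply Hs, E, Hw.
  - destruct (IHf s s' E); tauto.
  - destruct (IHf1 s s' E), (IHf2 s s' E). split; [tauto|].
    intros (t & u & U & Ht & Hu). exists t, u. split; [|tauto].
    intro w. rewrite <- E. apply U.
  - destruct (IHf1 s s' E), (IHf2 s s' E). split; [|tauto].
    intros (t & u & U & Ht & Hu). exists t, u. split; [|tauto].
    intro w. rewrite <- E. apply U.
  - split; intros Hs w Hw; apply Hs, E, Hw.
  - split; [intros [w Hw]; exists w; apply E, Hw|].
    intros Hs w Hw; apply (Hs w), E, Hw.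
  - destruct (IHf1 s s' E), (IHf2 s s' E). tauto.
Qed.

Lemma ne_free_downward_closed f (s s' : state M) : ne_free f = true ->
  (forall w, s' w -> s w) ->
  (supp M f s -> supp M f s') /\ (anti M f s -> anti M f s').
Proof.
  revert s s'; induction f; simpl; intros s s' Hf Sub; try discriminate.
  - split; intros Hs w Hw; apply Hs, Sub, Hw.
  - destruct (IHf s s' Hf Sub); tauto.
  - apply andb_prop in Hf as [H1 H2].
    destruct (IHf1 s s' H1 Sub), (IHf2 s s' H2 Sub). split; [tauto|].
    intros (t & u & U & Ht & Hu).
    exists (fun w => s' w /\ t w), (fun w => s' w /\ u w). split; [|split].
    + intro w. specialize (U w). split; [intro Hw; specialize (Sub w Hw)|]; tauto.
    + exact (proj2 (IHf1 t _ H1 (fun w Hw => proj2 Hw)) Ht).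
    + exact (proj2 (IHf2 u _ H2 (fun w Hw => proj2 Hw)) Hu).
  - apply andb_prop in Hf as [H1 H2].
    destruct (IHf1 s s' H1 Sub), (IHf2 s s' H2 Sub). split; [|tauto].
    intros (t & u & U & Ht & Hu).
    exists (fun w => s' w /\ t w), (fun w => s' w /\ u w). split; [|split].
    + intro w. specialize (U w). split; [intro Hw; specialize (Sub w Hw)|]; tauto.
    + exact (proj1 (IHf1 t _ H1 (fun w Hw => proj2 Hw)) Ht).
    + exact (proj1 (IHf2 u _ H2 (fun w Hw => proj2 Hw)) Hu).
  - split; intros Hs w Hw; apply Hs, Sub, Hw.
  - apply andb_prop in Hf as [H1 H2].
    destruct (IHf1 s s' H1 Sub), (IHf2 s s' H2 Sub). tauto.
Qed.

Lemma ne_free_empty_state f (s : state M) : ne_free f = true -> (forall w, ~ s w) ->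
  supp M f s /\ anti M f s.
Proof.
  revert s; induction f; simpl; intros s Hf E; try discriminate.
  - split; intros w Hw; destruct (E w Hw).
  - destruct (IHf s Hf E); tauto.
  - apply andb_prop in Hf as [H1 H2]. destruct (IHf1 s H1 E), (IHf2 s H2 E).
    split; [tauto|]. exists s, s. split; [intro w|]; tauto.
  - apply andb_prop in Hf as [H1 H2]. destruct (IHf1 s H1 E), (IHf2 s H2 E).
    split; [|tauto]. exists s, s. split; [intro w|]; tauto.
  - split; intros w Hw; destruct (E w Hw).
  - apply andb_prop in Hf as [H1 H2]. destruct (IHf1 s H1 E), (IHf2 s H2 E). tauto.
Qed.

Lemma gor_free_union_closed f (s t u : state M) : gor_free f = true -> is_union s t u ->
  (supp M f t -> supp M f u -> supp M f s) /\ (anti M f t -> anti M f u -> anti M f s).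
Proof.
  revert s t u; induction f; simpl; intros s t u Hf U; try discriminate.
  - split; intros Ht Hu w Hw; destruct (proj1 (U w) Hw); auto.
  - destruct (IHf s t u Hf U); tauto.
  - apply andb_prop in Hf as [H1 H2].
    destruct (IHf1 s t u H1 U), (IHf2 s t u H2 U). split; [tauto|].
    intros (t1 & u1 & U1 & Ht1 & Hu1) (t2 & u2 & U2 & Ht2 & Hu2).
    exists (fun w => t1 w \/ t2 w), (fun w => u1 w \/ u2 w). split; [|split].
    + intro w. rewrite (U w), (U1 w), (U2 w). tauto.
    + apply (proj2 (IHf1 _ t1 t2 H1 (fun w => iff_refl _))); auto.
    + apply (proj2 (IHf2 _ u1 u2 H2 (fun w => iff_refl _))); auto.
  - apply andb_prop in Hf as [H1 H2].
    destruct (IHf1 s t u H1 U), (IHf2 s t u H2 U). split; [|tauto].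
    intros (t1 & u1 & U1 & Ht1 & Hu1) (t2 & u2 & U2 & Ht2 & Hu2).
    exists (fun w => t1 w \/ t2 w), (fun w => u1 w \/ u2 w). split; [|split].
    + intro w. rewrite (U w), (U1 w), (U2 w). tauto.
    + apply (proj1 (IHf1 _ t1 t2 H1 (fun w => iff_refl _))); auto.
    + apply (proj1 (IHf2 _ u1 u2 H2 (fun w => iff_refl _))); auto.
  - split; intros Ht Hu w Hw; destruct (proj1 (U w) Hw); auto.
  - split.
    + intros [w Hw] _. exists w. apply U. auto.
    + intros Ht Hu w Hw. destruct (proj1 (U w) Hw); [apply (Ht w)|apply (Hu w)]; auto.
Qed.

(* Truth at a single world; the clauses for [NE] and [GOr] are junk, as it is
   only used for classical formulas. *)
Fixpoint holds (f : form) (w : W M) : Prop :=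
  match f with
  | Var p => Val M p w
  | Neg g => ~ holds g w
  | And g h => holds g w /\ holds h w
  | Or g h => holds g w \/ holds h w
  | Dia g => exists v, Rel M w v /\ holds g v
  | NE | GOr _ _ => True
  end.

Lemma classical_flat f (s : state M) : classical f = true ->
  (supp M f s <-> forall w, s w -> holds f w) /\
  (anti M f s <-> forall w, s w -> ~ holds f w).
Proof.
  revert s; induction f; simpl; intros s Hf; try discriminate.
  - split; reflexivity.
  - destruct (IHf s Hf) as [-> ->]. split; [reflexivity|].
    split; intros K w Hw; [intro N; apply N|apply NNPP]; auto.
  - apply andb_prop in Hf as [H1 H2].
    split; [rewrite (proj1 (IHf1 s H1)), (proj1 (IHf2 s H2)); firstorder|split].
    + intros (t & u & U & Ht & Hu) w Hw [T1 T2].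
      rewrite (proj2 (IHf1 t H1)) in Ht. rewrite (proj2 (IHf2 u H2)) in Hu.
      destruct (proj1 (U w) Hw); firstorder.
    + intro K. exists (fun w => s w /\ ~ holds f1 w), (fun w => s w /\ ~ holds f2 w).
      rewrite (proj2 (IHf1 _ H1)), (proj2 (IHf2 _ H2)). split; [|firstorder].
      intro w. split; [|tauto]. intro Hw. specialize (K w Hw).
      destruct (classic (holds f1 w)); tauto.
  - apply andb_prop in Hf as [H1 H2].
    split; [split|rewrite (proj2 (IHf1 s H1)), (proj2 (IHf2 s H2)); firstorder].
    + intros (t & u & U & Ht & Hu) w Hw.
      rewrite (proj1 (IHf1 t H1)) in Ht. rewrite (proj1 (IHf2 u H2)) in Hu.
      destruct (proj1 (U w) Hw); firstorder.
    + intro K. exists (fun w => s w /\ holds f1 w), (fun w => s w /\ holds f2 w).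
      rewrite (proj1 (IHf1 _ H1)), (proj1 (IHf2 _ H2)). split; [|firstorder].
      intro w. split; [|tauto]. intro Hw. specialize (K w Hw). tauto.
  - split; split.
    + intros K w Hw. destruct (K w Hw) as (t & Rt & [v Hv] & Ht).
      rewrite (proj1 (IHf t Hf)) in Ht. exists v. auto.
    + intros K w Hw. destruct (K w Hw) as (v & Hv & Tv).
      exists (fun x => x = v). rewrite (proj1 (IHf _ Hf)).
      split; [intros x ->|split; [exists v|intros x ->]]; auto.
    + intros K w Hw [v [Hv Tv]]. exact (proj1 (proj2 (IHf _ Hf)) (K w Hw) v Hv Tv).
    + intros K w Hw. apply (proj2 (IHf _ Hf)). intros v Hv Tv. apply (K w Hw). eauto.
Qed.

End Closure.

Section LocalRules.
Variable M : model.
Implicit Types s : state M.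

Lemma supp_Bot_empty s : supp M Bot s -> forall w, ~ s w.
Proof. simpl. intros [HV HnV] w Hw. exact (HnV w Hw (HV w Hw)). Qed.

Lemma supp_classical_explosion a b s : classical a = true -> classical b = true ->
  supp M a s -> supp M (Neg a) s -> supp M b s.
Proof.
  intros Ca Cb Ha Hna. apply (classical_flat M b s Cb). intros w Hw.
  destruct (proj1 (proj2 (classical_flat M a s Ca)) Hna w Hw).
  exact (proj1 (proj1 (classical_flat M a s Ca)) Ha w Hw).
Qed.

Lemma supp_Or_ne_free_r f g s : ne_free g = true -> supp M f s -> supp M (Or f g) s.
Proof.
  intros Hg Hf. exists s, (fun _ => False). split; [intro w; tauto|split; [exact Hf|]].
  exact (proj1 (ne_free_empty_state M g _ Hg (fun w Hw => Hw))).
Qed.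

Lemma supp_Or_Bot_l f s : supp M (Or Bot f) s -> supp M f s.
Proof.
  intros (t & u & U & Ht & Hu).
  apply (supp_anti_ext M f u s); [|exact Hu].
  intro w. rewrite (U w). split; [auto|].
  intros [Hw | Hw]; [destruct (supp_Bot_empty t Ht w Hw)|exact Hw].
Qed.

Lemma supp_Dia_Or f g s : supp M (Dia f) s -> supp M (Dia g) s -> supp M (Dia (Or f g)) s.
Proof.
  intros Hf Hg w Hw.
  destruct (Hf w Hw) as (t1 & R1 & [v1 H1] & Ht1), (Hg w Hw) as (t2 & R2 & _ & Ht2).
  exists (fun v => t1 v \/ t2 v). split; [intros v [?|?]; auto|split; [exists v1; auto|]].
  exists t1, t2. split; [intro v; tauto|auto].
Qed.

Lemma supp_Box_Or_Dia f g s : supp M (Box f) s -> supp M (Dia g) s ->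
  supp M (Box (Or f g)) s.
Proof.
  intros Hf Hg w Hw. destruct (Hg w Hw) as (t & Rt & _ & Ht).
  exists (fun v => Rel M w v), t. split; [|split; [exact (Hf w Hw)|exact Ht]].
  intro v. split; [auto|intros [?|?]; auto].
Qed.

Lemma supp_Dia_GOr f g s : supp M (Dia (GOr f g)) s -> supp M (Or (Dia f) (Dia g)) s.
Proof.
  intros Hfg.
  exists (fun w => s w /\ supp M (Dia f) (fun v => v = w)),
         (fun w => s w /\ supp M (Dia g) (fun v => v = w)).
  split; [intro w; split; [intro Hw|tauto]|split].
  - destruct (Hfg w Hw) as (t & Rt & NEt & [Ht | Ht]); [left|right];
      (split; [exact Hw|intros v ->; eauto]).
  - intros w [_ Hw]. exact (Hw w eq_refl).
  - intros w [_ Hw]. exact (Hw w eq_refl).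
Qed.

Lemma supp_Box_GOr f g s : supp M (Box (GOr f g)) s -> supp M (Or (Box f) (Box g)) s.
Proof.
  intros Hfg.
  exists (fun w => s w /\ supp M f (fun v => Rel M w v)),
         (fun w => s w /\ supp M g (fun v => Rel M w v)).
  split; [intro w; split; [intro Hw|tauto]|split; intros w [_ Hw]; exact Hw].
  destruct (Hfg w Hw); [left|right]; auto.
Qed.

Lemma supp_Or_Dia_GOr f g s : supp M (Or (Dia f) (Dia g)) s -> supp M (Dia (GOr f g)) s.
Proof.
  intros (t & u & U & Ht & Hu) w Hw.
  destruct (proj1 (U w) Hw) as [Hwt | Hwu];
    [destruct (Ht w Hwt) as (t' & R & NE' & H')|destruct (Hu w Hwu) as (t' & R & NE' & H')];
    exists t'; simpl; auto.
Qed.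

End LocalRules.

Lemma nefree_sub_supp M D G f (s t : state M) : nefree_sub D G f ->
  (forall phi, G phi -> supp M phi s) -> (forall w, t w -> s w) -> supp M f t ->
  forall phi, D phi -> supp M phi t.
Proof.
  intros [DG DNE] HG Sub Hf phi Hphi.
  destruct (DG phi Hphi) as [Gphi | ->]; [|exact Hf].
  exact (proj1 (ne_free_downward_closed M phi s t (DNE phi Hphi) Sub) (HG phi Gphi)).
Qed.

Lemma entails_assumption G f : G f -> entails G f.
Proof. intros Gf M s HG. exact (HG f Gf). Qed.

Lemma entails_cut1 G f g : (forall M s, supp M f s -> supp M g s) ->
  entails G f -> entails G g.
Proof. intros fg Hf M s HG. exact (fg M s (Hf M s HG)). Qed.

Lemma entails_cut2 G f g h : (forall M s, supp M f s -> supp M g s -> supp M h s) ->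
  entails G f -> entails G g -> entails G h.
Proof. intros fgh Hf Hg M s HG. exact (fgh M s (Hf M s HG) (Hg M s HG)). Qed.

Lemma negI_sound G D a : classical a = true -> nefree_sub D G a -> entails D Bot ->
  entails G (Neg a).
Proof.
  intros Ca Sub DBot M s HG. apply (proj2 (proj2 (classical_flat M a s Ca))).
  intros w Hw Ta.
  assert (Hsing : supp M a (fun v => v = w)).
  { apply (classical_flat M a _ Ca). intros v ->. exact Ta. }
  assert (Hsub : forall v, v = w -> s v) by (intros v ->; exact Hw).
  refine (supp_Bot_empty M (fun v => v = w) (DBot M _ _) w eq_refl).
  exact (nefree_sub_supp M D G a s _ Sub HG Hsub Hsing).
Qed.

Lemma orE_sound G D1 D2 f g h : entails G (Or f g) ->
  nefree_sub D1 G f -> entails D1 h -> nefree_sub D2 G g -> entails D2 h ->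
  gor_free h = true -> entails G h.
Proof.
  intros Hfg Sub1 Hh1 Sub2 Hh2 Ch M s HG.
  destruct (Hfg M s HG) as (t & u & U & Ht & Hu).
  apply (proj1 (gor_free_union_closed M h s t u Ch U)).
  - apply Hh1, (nefree_sub_supp M D1 G f s t Sub1 HG); [|exact Ht].
    intros w Hw. apply U. auto.
  - apply Hh2, (nefree_sub_supp M D2 G g s u Sub2 HG); [|exact Hu].
    intros w Hw. apply U. auto.
Qed.

Lemma orMon_sound G D f g h : entails G (Or f g) -> nefree_sub D G g -> entails D h ->
  entails G (Or f h).
Proof.
  intros Hfg Sub Hh M s HG.
  destruct (Hfg M s HG) as (t & u & U & Ht & Hu).
  exists t, u. split; [exact U|split; [exact Ht|]].
  apply Hh, (nefree_sub_supp M D G g s u Sub HG); [|exact Hu].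
  intros w Hw. apply U. auto.
Qed.

Lemma diaMon_sound G f g : entails (only f) g -> entails G (Dia f) -> entails G (Dia g).
Proof.
  intros fg Hf M s HG w Hw.
  destruct (Hf M s HG w Hw) as (t & Rt & NEt & Ht).
  exists t. split; [exact Rt|split; [exact NEt|]].
  apply fg. intros phi ->. exact Ht.
Qed.

Lemma boxMon_sound G l g : entails (fun x => In x l) g ->
  (forall f, In f l -> entails G (Box f)) -> entails G (Box g).
Proof.
  intros lg Hl M s HG w Hw. apply lg. intros f Hf. exact (Hl f Hf M s HG w Hw).
Qed.

Lemma gorE_sound G f g h : entails G (GOr f g) ->
  entails (ext G f) h -> entails (ext G g) h -> entails G h.
Proof.
  intros Hfg Hf Hg M s HG.
  destruct (Hfg M s HG) as [Hs | Hs]; [apply Hf|apply Hg]; intros phi [Gphi | ->]; auto.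
Qed.

Lemma gorAx_sound G : entails G (GOr Bot NE).
Proof.
  intros M s _. destruct (classic (exists w, s w)) as [Hne | He]; [right; exact Hne|left].
  split; intros w Hw; destruct He; exists w; exact Hw.
Qed.

Theorem theorem4p3 (Phi : form -> Prop) (psi : form) :
  Der Phi psi -> entails Phi psi.
Proof.
  induction 1.
  (* The double negation and De Morgan rules are sound by conversion, [anti]
     being defined dually to [supp]. *)
  all: try solve [eauto 2 using entails_assumption, negI_sound, orE_sound, orMon_sound,
                    diaMon_sound, boxMon_sound, gorE_sound, gorAx_sound].
  all: try solve [refine (entails_cut2 _ _ _ _ _ IHDer1 IHDer2); intros M s;
                  eauto using supp_classical_explosion, supp_Dia_Or, supp_Box_Or_Dia
                  || (simpl; tauto)].
  all: refine (entails_cut1 _ _ _ _ IHDer); intros M s.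
  all: eauto using supp_Or_ne_free_r, supp_Or_Bot_l, supp_Dia_GOr, supp_Box_GOr,
         supp_Or_Dia_GOr.
  all: unfold Box, BotBot, Bot; simpl; firstorder.
Qed.
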